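(* Let $h(\eta)$ be a radially homogeneous polynomial of degree $l$ on $T_p^*Y$, written as $h(\eta)=\sum_{j=0}^{l'}\eta_0^j h_j(\eta')$ with $h_j$ a homogeneous polynomial of degree $l-j$ and $h_{l'}\neq0$, where $l'\leq l$. Then for every integer $k$, $h(\eta)|\eta|^{-k}$ lifts to define an element of $S^{\,l-k,\;l'+l-2k,\;l'+l-2k}_{eH}$, and, as parabolically homogeneous functions on the half spaces $\pm\eta_0>0$, its Heisenberg principal symbols are $$(\pm1)^{l'}\,|\eta_0|^{l'-k}\,h_{l'}(\eta').$$
   Context: $Y$ is a co-oriented contact manifold of dimension $2n-1$ and $p\in Y$; Darboux coordinates centered at $p$ give linear coordinates $\eta=(\eta_0,\eta')$, $\eta'\in\mathbb{R}^{2(n-1)}$, on $T_p^*Y$, with the contact line $L_p=\{\eta'=0\}$. The radial compactification of $T_p^*Y$ adds a sphere at infinity with defining function $r_R=1/|\eta|$. The extended Heisenberg compactification is obtained from the radial one by parabolically blowing up (with parabolic direction the conormal to the boundary) the two boundary points of the closure of $L_p$; it has three boundary hypersurfaces: the classical face with defining function $r_c$ and the upper and lower Heisenberg faces (over $\eta_0\to+\infty$, resp. $-\infty$) with defining functions $r_{e+},r_{e-}$; in the interior of the Heisenberg faces $|\eta_0|^{-1/2}$ is a defining function. Extended Heisenberg symbols: $S^{m_c,m_+,m_-}_{eH}=r_c^{-m_c}r_{e+}^{-m_+}r_{e-}^{-m_-}C^\infty$ of the extended Heisenberg compactification. The Heisenberg principal symbols of such a symbol, of Heisenberg orders $m_\pm$,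 are the leading terms at the upper/lower Heisenberg faces, represented by functions on the half spaces $\pm\eta_0>0$ homogeneous of degree $m_\pm$ with respect to the parabolic dilation $(\eta_0,\eta')\mapsto(\lambda^2\eta_0,\lambda\eta')$. ''Lifts'' means the pullback to the extended Heisenberg compactification. *)

From HB Require Import structures.
From mathcomp Require Import all_boot all_order all_algebra.
From mathcomp Require Import all_classical all_reals all_analysis.
Set Implicit Arguments. Unset Strict Implicit. Unset Printing Implicit Defensive.
Import Order.TTheory GRing.Theory Num.Theory.
Import numFieldNormedType.Exports.
Local Open Scope classical_set_scope.
Local Open Scope ring_scope.

(* Coordinates on T_p^*Y = R^{2n-1}: eta = (eta0, eta') with eta0 : R and
   eta' : 'rV[R]_d, d = 2(n-1).  All chart coordinates are likewise taken in
   R * 'rV[R]_d (a space of the same dimension 2n-1). *)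

Section Defs.
Variable R : realType.

Fixpoint iterD (V : normedModType R) (vs : seq V) (g : V -> R) : V -> R :=
  if vs is v :: vs' then 'D_v (iterD vs' g) else g.

Definition smooth_on (V : normedModType R) (U : set V) (g : V -> R) : Prop :=
  open U /\
  forall vs : seq V,
    (forall x, U x -> {for x, continuous (iterD vs g)}) /\
    (forall v x, U x -> derivable (iterD vs g) x v).

Variable d : nat.
Notation P := (R * 'rV[R]_d)%type.

(* F, defined (meaningfully) on the part Pos of the chart domain D lying over
   the interior, extends smoothly up to the boundary of D (D may contain
   boundary points, i.e. zeros of the boundary coordinates). *)
Definition chart_smooth (D Pos : set P) (F : P -> R) : Prop :=
  exists U : set P, D `<=` U /\
    exists G : P -> R, smooth_on U G /\ forall p, D p -> Pos p -> G p = F p.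

Definition sgn (b : bool) : R := (-1) ^+ b.

Definition setj (u : 'rV[R]_d) (j : 'I_d) (c : R) : 'rV[R]_d :=
  \row_k (if k == j then c else u ord0 k).

Definition eucl (e0 : R) (e' : 'rV[R]_d) : R :=
  Num.sqrt (e0 ^+ 2 + \sum_(i < d) e' ord0 i ^+ 2).

(* Membership in S^{mc, mp, mm}_{eH}: a = r_c^{-mc} r_{e+}^{-mp} r_{e-}^{-mm}
   times a function smooth on the extended Heisenberg compactification,
   written in an explicit atlas of that compactification:
   - interior chart: eta itself;
   - radial-compactification charts away from the closure of L_p
     (classical face x = 0), for eta'_j dominant with sign s:
        eta0 = s u_j / x, eta'_j = s / x, eta'_k = s u_k / x (k <> j);
   - Heisenberg charts (interior of the face rho = 0 = |eta0|^{-1/2}), sign e: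
        eta0 = e / rho^2, eta' = w / rho;
   - corner charts (Heisenberg face t = 0, classical face z = u_j = 0),
     sign e of eta0, index j, sign s of eta'_j:
        eta0 = e / (z t^2), eta'_j = s / (z t), eta'_k = s u_k/(z t).
   In the corner charts r_c ~ z and r_e ~ t; in Heisenberg charts r_e ~ rho;
   in radial charts r_c ~ x (lifts of radial r_R = 1/|eta| are r_c r_e^2). *)
Definition eH_symbol (mc mp mm : int) (a : R -> 'rV[R]_d -> R) : Prop :=
  let me (e : bool) := if e then mm else mp in
  smooth_on setT (fun p : P => a p.1 p.2)
  /\ (forall (j : 'I_d) (s : bool),
       chart_smooth
         [set p : P | 0 <= p.1 < 1 /\ forall k, `|p.2 ord0 k| < 2]
         [set p : P | 0 < p.1]
         (fun p => p.1 ^ mc *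
            a (sgn s * p.2 ord0 j / p.1) ((sgn s / p.1) *: setj p.2 j 1)))
  /\ (forall e : bool,
       chart_smooth
         [set p : P | 0 <= p.1 < 1 /\ forall k, `|p.2 ord0 k| < 2]
         [set p : P | 0 < p.1]
         (fun p => p.1 ^ (me e) * a (sgn e / p.1 ^+ 2) (p.1^-1 *: p.2)))
  /\ (forall (e : bool) (j : 'I_d) (s : bool),
       chart_smooth
         [set p : P | 0 <= p.1 < 2 /\ 0 <= p.2 ord0 j < 1 /\
                      forall k, k != j -> `|p.2 ord0 k| < 2]
         [set p : P | 0 < p.1 /\ 0 < p.2 ord0 j]
         (fun p => (p.2 ord0 j) ^ mc * p.1 ^ (me e) *
            a (sgn e / (p.2 ord0 j * p.1 ^+ 2))
              ((sgn s / (p.2 ord0 j * p.1)) *: setj p.2 j 1))).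

(* Heisenberg principal symbol of Heisenberg order m at the upper (e = false)
   resp. lower (e = true) Heisenberg face, represented as a parabolically
   homogeneous function sigma on the half space sgn e * eta0 > 0: it is the
   boundary value of r_e^m a, i.e.
   lim_{lam -> +oo} lam^{-m} a(lam^2 eta0, lam eta') = sigma(eta0, eta'). *)
Definition heis_psym (e : bool) (m : int) (a : R -> 'rV[R]_d -> R)
    (sigma : R -> 'rV[R]_d -> R) : Prop :=
  forall (e0 : R) (e' : 'rV[R]_d), 0 < sgn e * e0 ->
    (fun lam : R => lam ^ (- m) * a (lam ^+ 2 * e0) (lam *: e'))
      @ +oo --> sigma e0 e'.

Definition hom_poly (deg : nat) (g : 'rV[R]_d -> R) : Prop :=
  exists c : {ffun 'I_d -> 'I_deg.+1} -> R,
    forall x, g x = \sum_(al : {ffun 'I_d -> 'I_deg.+1} |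
                          (\sum_(i < d) (al i : nat) == deg)%N)
                      c al * \prod_(i < d) x ord0 i ^+ al i.

End Defs.

From Pilot Require Import Defs.
From HB Require Import structures.
From mathcomp Require Import all_boot all_order all_algebra.
From mathcomp Require Import all_classical all_reals all_analysis.
From mathcomp Require Import ring lra.
Set Implicit Arguments. Unset Strict Implicit. Unset Printing Implicit Defensive.
Import Order.TTheory GRing.Theory Num.Theory.
Import numFieldNormedType.Exports.
Local Open Scope classical_set_scope.
Local Open Scope ring_scope.

(* The symbol is a := h * rho(|eta|^2)^(-k/2), where rho(N) = N + F(1/16 - N)
   with F(x) = exp(-1/x) (x > 0) flat at 0, so that rho is smooth, positive and
   equal to N for N >= 1/16; hence a = h |eta|^-k for |eta| >= 1.  Every chart of
   the extended Heisenberg compactification has coordinates (z, t, A, w) with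
   eta0 = A / (z t^2), eta' = w / (z t), where z (resp. t) defines the classical
   (resp. Heisenberg) face.  By homogeneity of the h_j,
     z^(l-k) t^(l+l'-2k) a = (sum_j t^(l'-j) A^j h_j(w)) (A^2 + t^2 |w|^2)^(-k/2),
   which is smooth up to t = 0 since A^2 + t^2 |w|^2 >= 1 on the charts, and its
   value at t = 0, namely A^l' h_l'(w) |A|^(-k), is the Heisenberg principal symbol. *)

Section DirectionalDerivative.
Variables (R : realType) (V : normedModType R).

Lemma derive_line (f : V -> R) x v :
  'D_v f x = 'D_1 (fun h : R => f (h *: v + x)) 0.
Proof.
rewrite /derive; congr (lim (_ @ 0^')); apply: funext => h /=.
by rewrite addr0 scale0r add0r [_%:A]mulr1.
Qed.

Lemma chain_rule_dir (b : V -> R) (g : R -> R) x v :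
  derivable b x v -> derivable g (b x) 1 ->
  derivable (g \o b) x v /\ 'D_v (g \o b) x = 'D_1 g (b x) * 'D_v b x.
Proof.
move=> db dg; pose phi h := b (h *: v + x).
have dphi : derivable phi 0 1 by exact: (derivable1P b x v).1.
have phi0 : phi 0 = b x by rewrite /phi scale0r add0r.
have dg' : derivable g (phi 0) 1 by rewrite phi0.
split.
  apply/derivable1P/derivable1_diffP.
  by apply: (@differentiable_comp _ _ _ _ phi g); exact/derivable1_diffP.
rewrite derive_line (derive_line b).
by rewrite -[fun h => _]/(g \o phi) -!derive1E derive1_comp // phi0 derive1E.
Qed.

Lemma derive_real (f : R -> R) x v : derivable f x 1 ->
  derivable f x v /\ 'D_v f x = v * 'D_1 f x.
Proof.
move=> /derivable1_diffP df; split; first exact: diff_derivable.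
by rewrite deriveE // diff1E // derive1E.
Qed.

Lemma derive_linear (f : V -> R) x v :
  (forall a y z, f (a *: y + z) = a * f y + f z) ->
  derivable f x v /\ 'D_v f x = f v.
Proof.
move=> flin.
have Df : (fun h : R => h^-1 *: ((f \o shift x) (h *: v) - f x)) @ 0^' --> f v.
  apply: cvg_trans (cvg_cst (f v)).
  apply: near_eq_cvg; rewrite near_withinE; apply: nearW => h /= hn0.
    by rewrite flin addrK [_ *: _]mulrA mulVf ?mul1r.
  exact: dnbhs_filter.
by split; [apply: cvgP Df | exact: cvg_lim Df].
Qed.

End DirectionalDerivative.

Section Smoothn.
Variables (R : realType) (V : normedModType R).
Implicit Types (U : set V) (f g : V -> R).

Fixpoint smoothn (n : nat) U f : Prop :=
  (forall x, U x -> {for x, continuous f}) /\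
  (if n is n'.+1 then (forall x v, U x -> derivable f x v) /\
                      forall v, smoothn n' U ('D_v f) else True).

Lemma smoothn_cont n U f x : smoothn n U f -> U x -> {for x, continuous f}.
Proof. by case: n => [[]|n []] => cf _ /cf. Qed.

Lemma smoothnS n U f : smoothn n.+1 U f -> smoothn n U f.
Proof.
elim: n f => [|n IH] f [cf [df Df]]; first by split.
by split => //; split => // v; apply: IH.
Qed.

Lemma smoothn_iterD U (vs : seq V) n f :
  smoothn (n + size vs) U f -> smoothn n U (Defs.iterD vs f).
Proof.
elim: vs n f => [|v vs IH] n f /=; first by rewrite addn0.
by rewrite -addSnnS => /IH [_ [_ /(_ v)]].
Qed.

Lemma smoothn_smooth_on U f : open U -> (forall n, smoothn n U f) -> smooth_on U f.
Proof.
move=> oU sf; split => // vs.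
have [cf [df _]] := smoothn_iterD (sf (1 + size vs))%N.
by split => // v x; apply: df.
Qed.

Lemma eq_in_smoothn n U f g : open U -> (forall x, U x -> f x = g x) ->
  smoothn n U f -> smoothn n U g.
Proof.
move=> oU; elim: n f g => [|n IH] f g fg sf.
all: have nfg x (Ux : U x) : \forall y \near x, f y = g y
  by apply: filterS (open_nbhs_nbhs (conj oU Ux)) => y /fg.
all: have cg x (Ux : U x) : {for x, continuous g}
  by rewrite /prop_for /continuous_at -(fg x Ux); apply: cvg_trans (smoothn_cont sf Ux);
     apply: near_eq_cvg; apply: filterS (nfg x Ux) => y ->.
all: split => //.
case: sf => _ [df Df]; split => [x v Ux|v].
  by apply: near_eq_derivable (df x v Ux); apply: filterS (nfg x Ux) => y ->.
by apply: IH (Df v) => x Ux; exact: near_eq_derive (nfg x Ux).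
Qed.

Lemma smoothn_cst n U (c : R) : smoothn n U (fun _ => c).
Proof.
elim: n c => [|n IH] c; (split => [x _|]; first exact: cvg_cst) => //.
split => [x v _|v]; first exact: derivable_cst.
have -> : 'D_v (fun _ : V => c) = fun _ => 0 by apply: funext => x; exact: derive_cst.
exact: IH.
Qed.

Lemma smoothnD n U f g : open U -> smoothn n U f -> smoothn n U g ->
  smoothn n U (fun x => f x + g x).
Proof.
move=> oU; elim: n f g => [|n IH] f g [cf sf] [cg sg];
  (split => [x Ux|]; first by apply: cvgD; [exact: cf|exact: cg]) => //.
case: sf => df Df; case: sg => dg Dg.
split => [x v Ux|v]; first by apply: derivableD; [exact: df|exact: dg].
apply: (eq_in_smoothn (f := fun x => 'D_v f x + 'D_v g x)) => //.
  by move=> x Ux; symmetry; apply: deriveD; [exact: df|exact: dg].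
by apply: IH; [exact: Df|exact: Dg].
Qed.

Lemma smoothnM n U f g : open U -> smoothn n U f -> smoothn n U g ->
  smoothn n U (fun x => f x * g x).
Proof.
move=> oU; elim: n f g => [|n IH] f g [cf sf] [cg sg];
  (split => [x Ux|]; first by apply: cvgM; [exact: cf|exact: cg]) => //.
have f_sm : smoothn n U f by apply: smoothnS; split.
have g_sm : smoothn n U g by apply: smoothnS; split.
case: sf => df Df; case: sg => dg Dg.
split => [x v Ux|v]; first by apply: derivableM; [exact: df|exact: dg].
apply: (eq_in_smoothn (f := fun x => f x * 'D_v g x + g x * 'D_v f x)) => //.
  by move=> x Ux; symmetry; apply: deriveM; [exact: df|exact: dg].
by apply: smoothnD => //; [exact: IH f_sm (Dg v)|exact: IH g_sm (Df v)].
Qed.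

Lemma smoothnMl n U (c : R) f : open U -> smoothn n U f ->
  smoothn n U (fun x => c * f x).
Proof. by move=> oU; apply: smoothnM => //; exact: smoothn_cst. Qed.

Lemma smoothnX n U f m : open U -> smoothn n U f -> smoothn n U (fun x => f x ^+ m).
Proof.
move=> oU sf; elim: m => [|m IH]; first exact: smoothn_cst.
by under eq_fun do rewrite exprS; exact: smoothnM.
Qed.

Lemma smoothn_sum n U (I : Type) (r : seq I) (P : pred I) (F : I -> V -> R) :
  open U -> (forall i, P i -> smoothn n U (F i)) ->
  smoothn n U (fun x => \sum_(i <- r | P i) F i x).
Proof.
move=> oU sF; elim: r => [|i r IH].
  have -> : (fun x => \sum_(i <- [::] | P i) F i x) = fun _ => 0.
    by apply: funext => x; rewrite big_nil.
  exact: smoothn_cst.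
have -> : (fun x => \sum_(j <- i :: r | P j) F j x) =
    fun x => if P i then F i x + \sum_(j <- r | P j) F j x else \sum_(j <- r | P j) F j x.
  by apply: funext => x; rewrite big_cons.
by case Pi: (P i) => //; apply: smoothnD => //; exact: sF.
Qed.

Lemma smoothn_prod n U (I : Type) (r : seq I) (P : pred I) (F : I -> V -> R) :
  open U -> (forall i, P i -> smoothn n U (F i)) ->
  smoothn n U (fun x => \prod_(i <- r | P i) F i x).
Proof.
move=> oU sF; elim: r => [|i r IH].
  have -> : (fun x => \prod_(i <- [::] | P i) F i x) = fun _ => 1.
    by apply: funext => x; rewrite big_nil.
  exact: smoothn_cst.
have -> : (fun x => \prod_(j <- i :: r | P j) F j x) =
    fun x => if P i then F i x * \prod_(j <- r | P j) F j x else \prod_(j <- r | P j) F j x.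
  by apply: funext => x; rewrite big_cons.
by case Pi: (P i) => //; apply: smoothnM => //; exact: sF.
Qed.

End Smoothn.

Section SmoothnComp.
Variables (R : realType) (V : normedModType R).
Implicit Types (U : set V) (f : V -> R).

Lemma smoothn_comp n (W : set R) U (g : R -> R) b : open W -> open U ->
  smoothn n W g -> smoothn n U b -> (forall x, U x -> W (b x)) ->
  smoothn n U (g \o b).
Proof.
move=> oW oU; elim: n g b => [|n IH] g b [cg sg] [cb sb] bW;
  (split => [x Ux|]; first by apply: continuous_comp; [exact: cb|exact: cg (bW x Ux)]) => //.
have g'_sm : smoothn n U ('D_1 g \o b).
  by case: sg => _ Dg; apply: IH => //; [exact: Dg|apply: smoothnS; split].
case: sg => dg _; case: sb => db Db.
have chain x v (Ux : U x) := chain_rule_dir (db x v Ux) (dg (b x) 1 (bW x Ux)).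
split => [x v Ux|v]; first exact: (chain x v Ux).1.
apply: (eq_in_smoothn (f := fun x => ('D_1 g \o b) x * 'D_v b x)) => //.
  by move=> x Ux; rewrite (chain x v Ux).2.
by apply: smoothnM => //; exact: Db.
Qed.

Lemma smoothn_linear n U f : open U -> continuous f ->
  (forall a y z, f (a *: y + z) = a * f y + f z) -> smoothn n U f.
Proof.
move=> oU cf flin; case: n => [|n]; (split => [x _|]; first exact: cf) => //.
split => [x v _|v]; first exact: (derive_linear x v flin).1.
apply: (eq_in_smoothn (f := fun _ => f v)) => //; last exact: smoothn_cst.
by move=> x _; rewrite (derive_linear x v flin).2.
Qed.

End SmoothnComp.

Section PowR.
Variable R : realType.

Lemma smoothn_powR n (r : R) : smoothn n [set y : R | 0 < y] (fun y => y `^ r).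
Proof.
have dpow (s : R) x : 0 < x -> derivable (fun y => y `^ s) x 1.
  by move=> x0; exact: (is_derive1_powR s x0).(ex_derive).
elim: n r => [|n IH] r;
  (split => [x x0|]; first exact/differentiable_continuous/derivable1_diffP/dpow) => //.
split => [x v x0|v]; first exact: (derive_real v (dpow r x x0)).1.
apply: (eq_in_smoothn (f := fun y => v * (r * y `^ (r - 1)))); first exact: open_gt.
  move=> x x0; rewrite (derive_real v (dpow r x x0)).2.
  by rewrite (is_derive1_powR r x0).(derive_val).
by do 2 (apply: smoothnMl; first exact: open_gt).
Qed.

End PowR.

Section FlatFunction.
Variable R : realType.

Lemma poly_expRN_bound (q : {poly R}) : exists C : R, 0 <= C /\
  forall y, 1 <= y -> `|q.[y]| * expR (- y) <= C / y.
Proof.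
set m := size q; set S := \sum_(i < m) `|q`_i|.
have S0 : 0 <= S by apply: sumr_ge0.
exists (S * (m.+1)`!%:R); split; first exact: mulr_ge0.
move=> y y1; have y0 : 0 < y by lra.
have qy : `|q.[y]| <= S * y ^+ m.
  rewrite horner_coef /S mulr_suml; apply: le_trans (ler_norm_sum _ _ _) _.
  apply: ler_sum => i _; rewrite normrM normrX (ger0_norm (ltW y0)).
  by apply: ler_wpM2l => //; apply: ler_weXn2l => //; exact: ltnW.
have fact0 : 0 < (m.+1)`!%:R :> R by rewrite ltr0n fact_gt0.
have ym0 : 0 < y ^+ m.+1 by exact: exprn_gt0.
have expRNy : expR (- y) <= (m.+1)`!%:R / y ^+ m.+1.
  rewrite expRN -invf_div lef_pV2 ?posrE ?expR_gt0 ?divr_gt0 //.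
  by apply: le_trans (expR_ge1Dxn m (ltW y0)); lra.
apply: le_trans (ler_pM (normr_ge0 _) (expR_ge0 _) qy expRNy) _.
suff -> : S * y ^+ m * ((m.+1)`!%:R / y ^+ m.+1) = S * (m.+1)`!%:R / y by [].
by rewrite exprS; field; rewrite expf_neq0 ?gt_eqF.
Qed.

(* The polynomial factor makes the family closed under differentiation, see
   [derive_flat]. *)
Definition flat (p : {poly R}) (x : R) : R :=
  if 0 < x then p.[x^-1] * expR (- x^-1) else 0.

Definition flat_dpoly (p : {poly R}) : {poly R} := 'X^2 * (p - p^`()).

Lemma flat_le0 p x : x <= 0 -> flat p x = 0.
Proof. by move=> x0; rewrite /flat ltNge x0. Qed.

Lemma flat1_gt0 x : 0 < x -> 0 < flat 1 x.
Proof. by move=> x0; rewrite /flat x0 hornerC mul1r expR_gt0. Qed.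

Lemma derive_flat0 p : derivable (flat p) 0 1 /\ 'D_1 (flat p) 0 = 0.
Proof.
have [C [C0 HC]] := poly_expRN_bound ('X * p).
have quot : (fun h : R => h^-1 *: ((flat p \o shift 0) (h *: 1) - flat p 0)) =
            (fun h => h^-1 * flat p h).
  by apply: funext => h /=; rewrite (flat_le0 p (lexx 0)) subr0 addr0 [_%:A]mulr1.
have lim0 : (fun h => h^-1 * flat p h) @ 0^' --> 0.
  apply/cvgr0Pnorm_lt => e e0.
  have eC : 0 < e / (C + 1) by apply: divr_gt0 => //; lra.
  rewrite near_withinE; near=> h => hn0.
  have h1 : `|h| < 1.
    by near: h; exact: (@cvgr0_norm_lt _ _ _ (nbhs (0:R)) _ id cvg_id _ ltr01).
  have h2 : `|h| < e / (C + 1).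
    by near: h; exact: (@cvgr0_norm_lt _ _ _ (nbhs (0:R)) _ id cvg_id _ eC).
  rewrite /flat; case: ifPn => h0; last by rewrite mulr0 normr0.
  rewrite gtr0_norm // in h1 h2.
  have hy : 1 <= h^-1 by rewrite -invr1 lef_pV2 ?posrE //; lra.
  have := HC _ hy; rewrite hornerM hornerX invrK mulrA !normrM.
  rewrite (gtr0_norm (expR_gt0 _)) => /le_lt_trans; apply.
  by rewrite ltr_pdivlMr ?ltr_wpDl // in h2; nra.
have dflat : derivable (flat p) 0 1 by rewrite /derivable quot; exact: cvgP lim0.
by split => //; rewrite /derive quot; exact: cvg_lim lim0.
Unshelve. all: by end_near.
Qed.

Lemma derive_flat_gt0 p x : 0 < x ->
  derivable (flat p) x 1 /\ 'D_1 (flat p) x = flat (flat_dpoly p) x.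
Proof.
move=> x0; have xn0 : x != 0 by rewrite gt_eqF.
pose G := (horner p \o GRing.inv) * (expR \o (fun y : R => - y^-1)).
have nG : \forall y \near x, G y = flat p y.
  by near=> y; rewrite /flat ifT //; near: y; exact: lt_nbhsr.
have did : derivable id x 1 := @derivable_id _ _ x 1.
have dinv : derivable (fun y : R => y^-1) x 1 := derivableV xn0 did.
have Dinv : 'D_1 (fun y : R => y^-1) x = - x ^- 2.
  by rewrite (deriveV xn0 did) derive_id [_ *: _]mulr1.
have [dH DH] := chain_rule_dir dinv (@derivable_horner _ p x^-1).
have dinvN : derivable (fun y : R => - y^-1) x 1 := derivableN dinv.
have DinvN : 'D_1 (fun y : R => - y^-1) x = x ^- 2.
  by rewrite (deriveN dinv) Dinv opprK.
have [dE DE] := chain_rule_dir dinvN (@derivable_expR _ (- x^-1)).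
split; first exact: near_eq_derivable nG (derivableM dH dE).
rewrite -(near_eq_derive _ nG) (deriveM dH dE) DH DE Dinv DinvN.
rewrite (is_derive_poly p x^-1).(derive_val).
have -> : 'D_1 expR (- x^-1) = expR (- x^-1).
  by have := congr1 (fun g => g (- x^-1)) (derive_expR R).
rewrite /flat ifT // /flat_dpoly hornerM hornerXn hornerD hornerN /= /GRing.scale /=.
by field.
Unshelve. all: by end_near.
Qed.

Lemma derive_flat p x :
  derivable (flat p) x 1 /\ 'D_1 (flat p) x = flat (flat_dpoly p) x.
Proof.
case: (ltrgtP x 0) => [x0|x0|->]; last by rewrite flat_le0 //; exact: derive_flat0.
  have nG : \forall y \near x, (fun _ : R => (0:R)) y = flat p y.
    by near=> y; rewrite flat_le0 ?ltW //; near: y; exact: lt_nbhsl.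
  split; first exact: near_eq_derivable nG (derivable_cst _ _ _).
  by rewrite -(near_eq_derive _ nG) derive_cst flat_le0 ?ltW.
exact: derive_flat_gt0.
Unshelve. all: by end_near.
Qed.

Lemma smoothn_flat n p : smoothn n setT (flat p).
Proof.
elim: n p => [|n IH] p; (split => [x _|];
  first exact/differentiable_continuous/derivable1_diffP/(derive_flat p x).1) => //.
split => [x v _|v]; first exact: (derive_real v (derive_flat p x).1).1.
have -> : 'D_v (flat p) = (fun x => v * flat (flat_dpoly p) x).
  apply: funext => x.
  by rewrite (derive_real v (derive_flat p x).1).2 (derive_flat p x).2.
by apply: smoothnMl; [exact: openT|exact: IH].
Qed.

End FlatFunction.

Section HomogeneousPolynomial.
Variables (R : realType) (d : nat).

Lemma hom_poly_scale deg (g : 'rV[R]_d -> R) (c : R) w : hom_poly deg g ->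
  g (c *: w) = c ^+ deg * g w.
Proof.
move=> [cf gE]; rewrite !gE mulr_sumr; apply: eq_bigr => al /eqP deg_al.
under eq_bigr do rewrite mxE exprMn.
by rewrite big_split /= prodrXr deg_al mulrCA.
Qed.

Lemma smoothn_hom_poly (V : normedModType R) n deg (g : 'rV[R]_d -> R)
    (W : V -> 'rV[R]_d) :
  hom_poly deg g -> (forall i, smoothn n setT (fun x => W x ord0 i)) ->
  smoothn n setT (fun x => g (W x)).
Proof.
move=> [cf gE] sW; under eq_fun do rewrite gE.
apply: smoothn_sum => [|al _]; first exact: openT.
apply: smoothnMl; first exact: openT.
apply: smoothn_prod => [|i _]; first exact: openT.
by apply: smoothnX; [exact: openT|exact: sW].
Qed.

End HomogeneousPolynomial.

Section Coordinates.
Variables (R : realType) (d : nat).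

Lemma smoothn_sumsq (V : normedModType R) n (W : V -> 'rV[R]_d) :
  (forall i, smoothn n setT (fun x => W x ord0 i)) ->
  smoothn n setT (fun x => \sum_(i < d) W x ord0 i ^+ 2).
Proof.
move=> sW; apply: smoothn_sum => [|i _]; first exact: openT.
by apply: smoothnX; [exact: openT|exact: sW].
Qed.

Lemma smoothn_fst n : smoothn n setT (fun p : R * 'rV[R]_d => p.1).
Proof. by apply: smoothn_linear => //; [exact: openT|move=> x; exact: cvg_fst]. Qed.

Lemma smoothn_coord n (i : 'I_d) : smoothn n setT (fun p : R * 'rV[R]_d => p.2 ord0 i).
Proof.
apply: smoothn_linear => [|x|a y z]; first exact: openT.
  apply: (@continuous_comp _ _ _ snd (fun M : 'rV[R]_d => M ord0 i)).
    exact: cvg_snd.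
  exact: coord_continuous.
by rewrite /= !mxE.
Qed.

End Coordinates.

Section Symbol.
Variables (R : realType) (d l l' : nat) (hs : nat -> 'rV[R]_d -> R) (k : int).
Hypothesis hs_hom : forall j, (j <= l')%N -> hom_poly (l - j) (hs j).
Hypothesis l'_le_l : (l' <= l)%N.

Definition sqnorm (e0 : R) (e' : 'rV[R]_d) := e0 ^+ 2 + \sum_(i < d) e' ord0 i ^+ 2.

Definition hpoly (e0 : R) (e' : 'rV[R]_d) := \sum_(j < l'.+1) e0 ^+ j * hs j e'.

Definition khalf : R := - k%:~R / 2.

Definition sqnorm_reg (N : R) := N + flat 1 (16^-1 - N).

Definition symb (e0 : R) (e' : 'rV[R]_d) := hpoly e0 e' * sqnorm_reg (sqnorm e0 e') `^ khalf.

Definition chart_symb (t A : R) (w : 'rV[R]_d) :=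
  (\sum_(j < l'.+1) t ^+ (l' - j) * A ^+ j * hs j w) * sqnorm A (t *: w) `^ khalf.

Definition mH : int := l'%:Z + l%:Z - 2 * k.

Lemma sqnorm_ge0 e0 e' : 0 <= sqnorm e0 e'.
Proof. by apply: addr_ge0; [exact: sqr_ge0|apply: sumr_ge0 => i _; exact: sqr_ge0]. Qed.

Lemma sqnorm_reg_id N : 16^-1 <= N -> sqnorm_reg N = N.
Proof. by move=> N16; rewrite /sqnorm_reg flat_le0 ?addr0 // subr_le0. Qed.

Lemma sqnorm_reg_gt0 N : 0 <= N -> 0 < sqnorm_reg N.
Proof.
move=> N0; rewrite /sqnorm_reg; case: (lerP 16^-1 N) => N16.
  by rewrite flat_le0 ?addr0 ?subr_le0 //; apply: lt_le_trans N16.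
by apply: ltr_wpDl => //; apply: flat1_gt0; rewrite subr_gt0.
Qed.

Lemma sqnorm_chart z t A w : z != 0 -> t != 0 ->
  sqnorm (A / (z * t ^+ 2)) ((z * t)^-1 *: w) =
  (z * t ^+ 2) ^- 2 * sqnorm A (t *: w).
Proof.
move=> zn0 tn0; rewrite /sqnorm mulrDr mulr_sumr; congr (_ + _).
  by field; rewrite zn0 tn0.
by apply: eq_bigr => i _; rewrite !mxE; field; rewrite zn0 tn0.
Qed.

Lemma sqr_powR_khalf x : 0 < x -> (x ^+ 2) `^ khalf = x ^ (- k).
Proof.
move=> x0; rewrite -powR_mulrn ?(ltW x0) // -powRrM.
by rewrite (_ : _ * khalf = (- k)%:~R) ?powR_intmul ?(ltW x0) // /khalf intrN; field.
Qed.

Lemma hpoly_chart z t A w : z != 0 -> t != 0 ->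
  z ^+ l * t ^+ (l + l') * hpoly (A / (z * t ^+ 2)) ((z * t)^-1 *: w) =
  \sum_(j < l'.+1) t ^+ (l' - j) * A ^+ j * hs j w.
Proof.
move=> zn0 tn0; rewrite /hpoly mulr_sumr; apply: eq_bigr => [[j /= jl']] _.
rewrite (hom_poly_scale _ _ (hs_hom jl')).
set a := (l - j)%N; set b := (l' - j)%N.
have -> : l = (j + a)%N by rewrite subnKC //; apply: leq_trans l'_le_l.
have -> : l' = (j + b)%N by rewrite subnKC.
rewrite !exprD !exprMn !exprVn !exprMn.
by field; rewrite !expf_neq0.
Qed.

Lemma chart_weight z t : 0 < z -> 0 < t ->
  z ^ (l%:Z - k) * t ^ mH * ((z * t ^+ 2) ^- 2) `^ khalf = z ^+ l * t ^+ (l + l').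
Proof.
move=> z0 t0; have zt0 : 0 < (z * t ^+ 2)^-1 by rewrite invr_gt0 mulr_gt0 ?exprn_gt0.
rewrite -exprVn sqr_powR_khalf // exprz_inv opprK expfzMl -mulrACA -expfzDr ?gt_eqF //.
rewrite (subrK k (Posz l)) (_ : t ^+ 2 = t ^ 2%:Z) // exprz_exp -expfzDr ?gt_eqF //.
by rewrite /mH (subrK (2 * k)) -PoszD addnC.
Qed.

Lemma symb_chart z t A w : 0 < z -> 0 < t ->
  16^-1 <= sqnorm (A / (z * t ^+ 2)) ((z * t)^-1 *: w) ->
  z ^ (l%:Z - k) * t ^ mH * symb (A / (z * t ^+ 2)) ((z * t)^-1 *: w) =
  chart_symb t A w.
Proof.
move=> z0 t0 far; rewrite /symb sqnorm_reg_id // sqnorm_chart ?gt_eqF //.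
rewrite powRM ?sqnorm_ge0 ?invr_ge0 ?exprn_ge0 ?mulr_ge0 ?sqr_ge0 ?(ltW z0) ?(ltW t0) //.
rewrite /chart_symb -(hpoly_chart (z := z) (t := t)) ?gt_eqF // -(chart_weight z0 t0).
ring.
Qed.

Lemma sqr_le_sqnorm e0 e' : e0 ^+ 2 <= sqnorm e0 e'.
Proof. by rewrite lerDl sumr_ge0 // => i _; exact: sqr_ge0. Qed.

Lemma sqr_coord_le_sqnorm e0 (e' : 'rV[R]_d) j : e' ord0 j ^+ 2 <= sqnorm e0 e'.
Proof.
rewrite /sqnorm (bigD1 j) //= addrCA lerDl addr_ge0 ?sqr_ge0 ?sumr_ge0 //.
by move=> i _; exact: sqr_ge0.
Qed.

Lemma sqnorm_chart_far z t A w : 0 < z -> 0 < t -> z * t ^+ 2 < 4 ->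
  1 <= sqnorm A (t *: w) -> 16^-1 <= sqnorm (A / (z * t ^+ 2)) ((z * t)^-1 *: w).
Proof.
move=> z0 t0 zt4 N1; have zt0 : 0 < z * t ^+ 2 by rewrite mulr_gt0 ?exprn_gt0.
have c16 : 16^-1 <= (z * t ^+ 2) ^- 2.
  by rewrite lef_pV2 ?posrE ?exprn_gt0 //; nra.
rewrite sqnorm_chart ?gt_eqF //; apply: le_trans c16 _.
by rewrite -[X in X <= _]mulr1 ler_wpM2l // invr_ge0 exprn_ge0 // ltW.
Qed.

Lemma smoothn_sqnorm (V : normedModType R) n (E0 : V -> R) (E : V -> 'rV[R]_d) :
  smoothn n setT E0 -> (forall i, smoothn n setT (fun x => E x ord0 i)) ->
  smoothn n setT (fun x => sqnorm (E0 x) (E x)).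
Proof.
move=> sE0 sE; apply: smoothnD; [exact: openT| |exact: smoothn_sumsq].
by apply: smoothnX => //; exact: openT.
Qed.

Lemma smoothn_chart_symb (V : normedModType R) n (T A : V -> R) (W : V -> 'rV[R]_d) :
  smoothn n setT T -> smoothn n setT A -> (forall i, smoothn n setT (fun x => W x ord0 i)) ->
  (forall x, 0 < sqnorm (A x) (T x *: W x)) ->
  smoothn n setT (fun x => chart_symb (T x) (A x) (W x)).
Proof.
move=> sT sA sW N0; apply: smoothnM; first exact: openT.
  apply: smoothn_sum => [|[j /= jl'] _]; first exact: openT.
  apply: smoothnM; [exact: openT| |exact: smoothn_hom_poly (hs_hom jl') sW].
  by apply: smoothnM; [exact: openT|exact: smoothnX openT sT|exact: smoothnX openT sA].
apply: (smoothn_comp (W := [set y : R | 0 < y]) (g := fun y => y `^ khalf)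
                     (b := fun x => sqnorm (A x) (T x *: W x))).
- exact: open_gt.
- exact: openT.
- exact: smoothn_powR.
- apply: smoothn_sqnorm => // i; under eq_fun do rewrite mxE.
  by apply: smoothnM; [exact: openT|exact: sT|exact: sW].
- by move=> x _; exact: N0.
Qed.

Lemma smoothn_symb (V : normedModType R) n (E0 : V -> R) (E : V -> 'rV[R]_d) :
  smoothn n setT E0 -> (forall i, smoothn n setT (fun x => E x ord0 i)) ->
  smoothn n setT (fun x => symb (E0 x) (E x)).
Proof.
move=> sE0 sE; apply: smoothnM; first exact: openT.
  apply: smoothn_sum => [|[j /= jl'] _]; first exact: openT.
  apply: smoothnM; [exact: openT|exact: smoothnX openT sE0|].
  exact: smoothn_hom_poly (hs_hom jl') sE.
apply: (smoothn_comp (W := [set y : R | 0 < y]) (g := fun y => y `^ khalf)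
                     (b := fun x => sqnorm_reg (sqnorm (E0 x) (E x)))).
- exact: open_gt.
- exact: openT.
- exact: smoothn_powR.
- apply: smoothnD; [exact: openT|exact: smoothn_sqnorm|].
  apply: (smoothn_comp (W := setT) (g := flat 1)
                       (b := fun x => 16^-1 - sqnorm (E0 x) (E x))) => //.
  + exact: openT.
  + exact: openT.
  + exact: smoothn_flat.
  apply: smoothnD; [exact: openT|exact: smoothn_cst|].
  under eq_fun do rewrite -mulN1r.
  by apply: smoothnMl; [exact: openT|exact: smoothn_sqnorm].
- by move=> x _; apply: sqnorm_reg_gt0; exact: sqnorm_ge0.
Qed.

Local Notation P := (R * 'rV[R]_d)%type.

Lemma chart_smooth_symb (D Pos : set P) (F : P -> R) (z t A : P -> R) (w : P -> 'rV[R]_d) :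
  (forall n, smoothn n setT t) -> (forall n, smoothn n setT A) ->
  (forall n i, smoothn n setT (fun p => w p ord0 i)) ->
  (forall p, 1 <= sqnorm (A p) (t p *: w p)) ->
  (forall p, D p -> Pos p -> [/\ 0 < z p, 0 < t p, z p * t p ^+ 2 < 4 &
     F p = z p ^ (l%:Z - k) * t p ^ mH *
           symb (A p / (z p * t p ^+ 2)) ((z p * t p)^-1 *: w p)]) ->
  chart_smooth D Pos F.
Proof.
move=> st sA sw N1 onD; exists setT; split => //.
exists (fun p => chart_symb (t p) (A p) (w p)); split.
  apply: smoothn_smooth_on => [|n]; first exact: openT.
  by apply: smoothn_chart_symb => // p; apply: lt_le_trans (N1 p).
move=> p Dp Pp; have [z0 t0 zt4 ->] := onD p Dp Pp.
by rewrite symb_chart // sqnorm_chart_far.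
Qed.

Lemma one_le_sqnorm_sgn (e : bool) w : 1 <= sqnorm (sgn R e) w.
Proof. by rewrite -(sqrr_sign R e) sqr_le_sqnorm. Qed.

Lemma one_le_sqnorm_setj (s : bool) A u j : 1 <= sqnorm A (sgn R s *: setj u j 1).
Proof.
apply: le_trans (sqr_coord_le_sqnorm _ _ j).
by rewrite !mxE eqxx mulr1 sqrr_sign.
Qed.

Lemma smoothn_setj n j (s : bool) i :
  smoothn n setT (fun p : P => (sgn R s *: setj p.2 j 1) ord0 i).
Proof.
under eq_fun do rewrite !mxE.
apply: smoothnMl; first exact: openT.
by case: (i == j); [exact: smoothn_cst|exact: smoothn_coord].
Qed.

Lemma mul_sqr_lt4 (z t : R) : 0 <= z <= 1 -> 0 <= t < 2 -> z * t ^+ 2 < 4.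
Proof. by move=> /andP[z0 z1] /andP[t0 t2]; nra. Qed.

Lemma symb_eH_symbol : eH_symbol (l%:Z - k) mH mH symb.
Proof.
split; [|split; [|split]].
- apply: smoothn_smooth_on => [|n]; first exact: openT.
  by apply: smoothn_symb; [exact: smoothn_fst|exact: smoothn_coord].
- move=> j s; apply: (chart_smooth_symb (z := fun p => p.1) (t := fun _ => 1)
    (A := fun p => sgn R s * p.2 ord0 j) (w := fun p => sgn R s *: setj p.2 j 1)).
  + by move=> n; exact: smoothn_cst.
  + by move=> n; apply: smoothnMl; [exact: openT|exact: smoothn_coord].
  + by move=> n i; exact: smoothn_setj.
  + by move=> p; rewrite scale1r one_le_sqnorm_setj.
  move=> p [/andP[x0 x1] _] xp.
  split; [exact: xp|exact: ltr01|apply: mul_sqr_lt4; apply/andP; split; lra|].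
  by rewrite expr1n !mulr1 exp1rz mulr1 scalerA [_^-1 * _]mulrC.
- move=> e; rewrite if_same; apply: (chart_smooth_symb (z := fun _ => 1)
    (t := fun p => p.1) (A := fun _ => sgn R e) (w := fun p => p.2)).
  + exact: smoothn_fst.
  + by move=> n; exact: smoothn_cst.
  + exact: smoothn_coord.
  + by move=> p; exact: one_le_sqnorm_sgn.
  move=> p [/andP[x0 x1] _] xp.
  split; [exact: ltr01|exact: xp|apply: mul_sqr_lt4; apply/andP; split; lra|].
  by rewrite exp1rz !mul1r.
- move=> e j s; rewrite if_same; apply: (chart_smooth_symb (z := fun p => p.2 ord0 j)
    (t := fun p => p.1) (A := fun _ => sgn R e) (w := fun p => sgn R s *: setj p.2 j 1)).
  + exact: smoothn_fst.
  + by move=> n; exact: smoothn_cst.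
  + by move=> n i; exact: smoothn_setj.
  + by move=> p; exact: one_le_sqnorm_sgn.
  move=> p [/andP[t0 t2] [/andP[z0 z1] _]] [tp zp].
  split; [exact: zp|exact: tp|apply: mul_sqr_lt4; apply/andP; split; lra|].
  by rewrite scalerA [_^-1 * _]mulrC.
Qed.

Lemma chart_symb_at0 A w : A != 0 ->
  chart_symb 0 A w = Num.sg A ^+ l' * `|A| ^ (l'%:Z - k) * hs l' w.
Proof.
move=> An0; rewrite /chart_symb big_ord_recr /= subnn expr0 mul1r big1 => [|i _]; last first.
  by rewrite expr0n subn_eq0 leqNgt ltn_ord !mul0r.
have -> : sqnorm A (0 *: w) = `|A| ^+ 2.
  rewrite /sqnorm big1 ?addr0 => [|i _]; last by rewrite !mxE mul0r expr0n.
  by rewrite -normrX ger0_norm ?sqr_ge0.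
rewrite add0r sqr_powR_khalf ?normr_gt0 // {1}[A]numEsg exprMn -!mulrA; congr (_ * _).
by rewrite expfzDr ?normr_eq0 // mulrCA [RHS]mulrC.
Qed.

Lemma inv_cvgy0 : (fun lam : R => lam^-1) @ +oo --> 0.
Proof.
apply: (gtr0_cvgV0 (f := id) _).2; last exact: cvg_id.
by near=> x; near: x; apply: nbhs_pinfty_gt; exact: num_real.
Unshelve. all: by end_near.
Qed.

Lemma symb_parabolic_lim e0 e' : e0 != 0 ->
  (fun lam => lam ^ (- mH) * symb (lam ^+ 2 * e0) (lam *: e')) @ +oo
    --> chart_symb 0 e0 e'.
Proof.
move=> e0n0; have e0_gt0 : 0 < `|e0| by rewrite normr_gt0.
have cont0 : {for 0, continuous (fun s : R => chart_symb s e0 e')}.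
  apply: (@smoothn_cont _ _ 0 setT) => //.
  apply: smoothn_chart_symb => [|||s]; last first.
  - by apply: lt_le_trans (sqr_le_sqnorm _ _); rewrite exprn_even_gt0.
  - by move=> i; exact: smoothn_cst.
  - exact: smoothn_cst.
  by apply: smoothn_linear => //; [exact: openT|move=> x; exact: cvg_id].
apply: cvg_trans (cvg_comp _ _ inv_cvgy0 cont0); apply: near_eq_cvg.
near=> lam; have lam1 : 1 <= lam by near: lam; apply: nbhs_pinfty_ge; exact: num_real.
have lam_e0 : `|e0|^-1 <= lam by near: lam; apply: nbhs_pinfty_ge; exact: num_real.
have lam0 : 0 < lam by lra.
have far : 1 <= lam ^+ 2 * `|e0|.
  have := ler_wpM2r (ltW e0_gt0) lam_e0; rewrite mulVf ?gt_eqF // => lam_e0'.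
  by rewrite expr2 -mulrA -[1]mulr1 ler_pM.
have -> : lam ^+ 2 * e0 = e0 / (1 * lam^-1 ^+ 2) by rewrite mul1r exprVn invrK mulrC.
have -> : lam *: e' = (1 * lam^-1)^-1 *: e' by rewrite mul1r invrK.
rewrite -exprz_inv -[_ ^ mH]mul1r -{1}(exp1rz R (l%:Z - k)) symb_chart ?invr_gt0 //.
rewrite mul1r exprVn invrK mulrC; apply: le_trans (sqr_le_sqnorm _ _).
rewrite exprMn -(real_normK (num_real e0)) -exprMn; apply: le_trans (exprn_ege1 2 far).
by rewrite invf_le1 ?ler1n.
Unshelve. all: by end_near.
Qed.

Lemma symb_far e0 e' : 1 <= eucl e0 e' -> symb e0 e' = hpoly e0 e' * eucl e0 e' ^ (- k).
Proof.
rewrite (_ : eucl e0 e' = Num.sqrt (sqnorm e0 e')) // => e1.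
have N0 := sqnorm_ge0 e0 e'.
have N1 : 1 <= sqnorm e0 e' by have := exprn_ege1 2 e1; rewrite sqr_sqrtr.
rewrite /symb sqnorm_reg_id; last by apply: le_trans N1; rewrite invf_le1 ?ler1n.
by rewrite -{1}(sqr_sqrtr N0) sqr_powR_khalf //; exact: lt_le_trans ltr01 e1.
Qed.

End Symbol.

Theorem proposition3 (R : realType) (n l l' : nat)
    (hs : nat -> 'rV[R]_(n.-1).*2 -> R) :
  (0 < n)%N -> (l' <= l)%N ->
  (forall j : nat, (j <= l')%N -> hom_poly (l - j) (hs j)) ->
  hs l' <> (fun _ => 0) ->
  forall k : int,
    let h := fun (e0 : R) (e' : 'rV[R]_(n.-1).*2) =>
               \sum_(j < l'.+1) e0 ^+ j * hs j e' in
    let mH := (l'%:Z + l%:Z - 2 * k)%R in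
    exists a : R -> 'rV[R]_(n.-1).*2 -> R,
      (forall e0 e', 1 <= eucl e0 e' -> a e0 e' = h e0 e' * eucl e0 e' ^ (- k)) /\
      eH_symbol (l%:Z - k) mH mH a /\
      heis_psym false mH a (fun e0 e' => e0 ^ (l'%:Z - k) * hs l' e') /\
      heis_psym true mH a
        (fun e0 e' => (-1) ^+ l' * `|e0| ^ (l'%:Z - k) * hs l' e').
Proof.
move=> _ l'_le_l hs_hom _ k h mH.
exists (symb l' hs k); split; [|split; [|split]].
- by move=> e0 e' /symb_far.
- exact: symb_eH_symbol.
- move=> e0 e'; rewrite /sgn expr0 mul1r => e0_gt0.
  have := symb_parabolic_lim (k := k) (e' := e') hs_hom l'_le_l (lt0r_neq0 e0_gt0).
  by rewrite chart_symb_at0 ?lt0r_neq0 // gtr0_sg // gtr0_norm // expr1n mul1r.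
- move=> e0 e'; rewrite /sgn expr1 mulN1r oppr_gt0 => e0_lt0.
  have := symb_parabolic_lim (k := k) (e' := e') hs_hom l'_le_l (ltr0_neq0 e0_lt0).
  by rewrite chart_symb_at0 ?ltr0_neq0 // ltr0_sg.
Qed.
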